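(* Let $\Omega$ be a planar triangle mesh with vertices $w_1,\dots,w_n\in\mathbb{C}$ and face set $\mathcal{F}$, and let $\mu$ be a piecewise constant Beltrami coefficient on $\Omega$, i.e. $\mu|_T=\mu_T=\rho_T+i\tau_T\in\mathbb{C}$ with $|\mu_T|<1$ for every face $T\in\mathcal{F}$. For $u,v\in\mathbb{R}^n$ define the discrete least-squares quasi-conformal energy $$E_{QC}^{\mu}(u,v)=\frac12\sum_{T\in\mathcal{F}}\operatorname{Area}(T)\,\big\|P_T\nabla u|_T+JP_T\nabla v|_T\big\|^2 .$$ Then the solution of the equation $E_{QC}^{\mu}(u,v)=0$ is unique up to scaling, rotation and translation: there exists $f_0\in\mathbb{C}^n$ such that, identifying $(u,v)$ with $f=u+iv\in\mathbb{C}^n$ (where $f_j=u_j+iv_j$ is the image of $w_j$), the set of all solutions is exactly $\{a f_0+b\mathbf{1}: a,b\in\mathbb{C}\}$, where $\mathbf{1}=(1,\dots,1)^T$.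
   Context: The mesh $\Omega$ is a connected triangulated planar domain whose faces are nondegenerate, consistently (positively) oriented triangles. A vector $u\in\mathbb{R}^n$ is identified with the continuous function on $\Omega$ that is linear on each face and takes value $u_j$ at $w_j$; on a face $T$ this function has constant gradient $\nabla u|_T\in\mathbb{R}^2$ (explicitly, if $T=[w_0^T,w_1^T,w_2^T]$ with values $u_0,u_1,u_2$, then $\nabla u|_T=\frac{1}{2\operatorname{Area}(T)}\begin{pmatrix}0&-1\\1&0\end{pmatrix}\sum_{i=0}^2u_i(w^T_{i+2}-w^T_{i+1})$ with indices mod 3 and points of $\mathbb{C}$ viewed as vectors in $\mathbb{R}^2$); similarly for $v$. On each face, $$P_T=\frac{1}{\sqrt{1-|\mu_T|^2}}\begin{pmatrix}1-\rho_T&-\tau_T\\-\tau_T&1+\rho_T\end{pmatrix},\qquad J=\begin{pmatrix}0&-1\\1&0\end{pmatrix}.$$ Vanishing of this energy is the discrete form of the Beltrami equation $f_{\bar z}=\mu f_z$ for the piecewise linear map $f=u+iv$. *)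

From HB Require Import structures.
From mathcomp Require Import all_boot all_order all_algebra.
From mathcomp Require Import complex.
Set Implicit Arguments. Unset Strict Implicit. Unset Printing Implicit Defensive.
Import Order.TTheory GRing.Theory Num.Theory.
Local Open Scope ring_scope.

Section Mesh.
Variables (R : rcfType) (n m : nat).
(* vertices w_j and faces T_t = [w_{F t 0}, w_{F t 1}, w_{F t 2}] *)
Variables (w : 'I_n -> R[i]) (F : 'I_m -> 'I_3 -> 'I_n).

(* the vertex of face t with local index k (indices taken mod 3) *)
Definition fvert (t : 'I_m) (k : nat) : R[i] := w (F t (inZp k)).

Definition signed_area (t : 'I_m) : R :=
  (complex.Re (fvert t 1 - fvert t 0) * complex.Im (fvert t 2 - fvert t 0)
   - complex.Im (fvert t 1 - fvert t 0) * complex.Re (fvert t 2 - fvert t 0)) / 2.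

Definition vecC (z : R[i]) : 'cV[R]_2 :=
  \col_(j < 2) (if j == ord0 then complex.Re z else complex.Im z).

Definition Jmx : 'M[R]_2 :=
  \matrix_(i < 2, j < 2)
    (if (i == ord0) && (j == ord0) then 0
     else if i == ord0 then -1
     else if j == ord0 then 1 else 0).

(* gradient of the piecewise linear interpolant of u on face t *)
Definition grad (u : 'I_n -> R) (t : 'I_m) : 'cV[R]_2 :=
  (2 * signed_area t)^-1 *:
    (Jmx *m \sum_(k < 3) u (F t k) *: vecC (fvert t (k + 2) - fvert t (k + 1))).

Definition Pmx (muT : R[i]) : 'M[R]_2 :=
  (Num.sqrt (1 - (complex.Re muT ^+ 2 + complex.Im muT ^+ 2)))^-1 *:
  \matrix_(i < 2, j < 2)
    (if (i == ord0) && (j == ord0) then 1 - complex.Re muT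
     else if (i != ord0) && (j != ord0) then 1 + complex.Re muT
     else - complex.Im muT).

Definition sqnorm2 (x : 'cV[R]_2) : R := \sum_(j < 2) x j ord0 ^+ 2.

Definition E_QC (mu : 'I_m -> R[i]) (u v : 'I_n -> R) : R :=
  2^-1 * \sum_(t < m) signed_area t *
     sqnorm2 (Pmx (mu t) *m grad u t + Jmx *m (Pmx (mu t) *m grad v t)).

Definition edge_adj : rel 'I_m := fun t1 t2 =>
  [exists i1 : 'I_3, exists i2 : 'I_3, exists j1 : 'I_3, exists j2 : 'I_3,
     [&& i1 != i2, F t1 i1 == F t2 j1 & F t1 i2 == F t2 j2]].

Definition in_open_face (t : 'I_m) (p : R[i]) : Prop :=
  exists lam : 'I_3 -> R, (forall k, 0 < lam k) /\ \sum_(k < 3) lam k = 1 /\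
    p = \sum_(k < 3) (lam k)%:C%C * w (F t k).

Definition planar_mesh : Prop :=
  injective w /\
  (forall t, 0 < signed_area t) /\
  (forall j : 'I_n, exists t k, F t k = j) /\
  (forall t1 t2, t1 != t2 -> forall p, ~ (in_open_face t1 p /\ in_open_face t2 p)) /\
  (forall t1 t2, connect edge_adj t1 t2).

End Mesh.

From HB Require Import structures.
From mathcomp Require Import all_boot all_order all_algebra.
From mathcomp Require Import complex.
From mathcomp Require Import ring.
From Stdlib Require Import Classical_Prop.
Import Order.TTheory GRing.Theory Num.Theory.
Set Implicit Arguments. Unset Strict Implicit. Unset Printing Implicit Defensive.
Local Open Scope ring_scope.
Local Open Scope complex_scope.

(* On each face T the energy density equals, up to the positive factor
   4 Area(T) / (1 - |mu_T|^2), the squared modulus of f_zbar - mu_T f_z, where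
   f_z and f_zbar are the Wirtinger derivatives of the affine interpolant of
   f = u + i v.  So E = 0 iff f solves the discrete Beltrami equation on every
   face, a C-linear condition satisfied by the constants.  On a face,
   f(p) - f(q) = f_z (p - q) + f_zbar conj(p - q); if a solution takes equal
   values at two distinct vertices p, q then f_z (d + mu conj d) = 0 with
   d = p - q and |mu conj d| < |d|, so f_z = f_zbar = 0 and f is constant on
   the face.  Constancy crosses shared edges, hence covers the connected mesh.
   Thus a solution is determined by its values at two vertices of one face, and
   the solutions are the a f0 + b for any solution f0 separating two such
   vertices (or f0 = 0 when none does). *)

Section ComplexPlane.
Variable R : rcfType.
Implicit Types (z mu : R[i]) (r : R).

Lemma vecC_is_zmod_morphism : zmod_morphism (@vecC R).
Proof.
by move=> [a b] [c d]; apply/matrixP => -[[|[|//]] ?] [[|//] ?]; rewrite !mxE.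
Qed.

HB.instance Definition _ := GRing.isZmodMorphism.Build R[i] 'cV[R]_2 (@vecC R)
  vecC_is_zmod_morphism.

Lemma vecC_realM r z : vecC (r%:C * z) = r *: vecC z.
Proof.
by case: z => a b; apply/matrixP => -[[|[|//]] ?] [[|//] ?]; rewrite !mxE /=; ring.
Qed.

Lemma mulmx_Jmx_vecC z : Jmx R *m vecC z = vecC ('i * z).
Proof.
case: z => a b; apply/matrixP => -[[|[|//]] ?] [[|//] ?];
  rewrite !mxE !big_ord_recr big_ord0 /= !mxE /=; ring.
Qed.

Definition Pmx_scale mu : R :=
  (Num.sqrt (1 - (complex.Re mu ^+ 2 + complex.Im mu ^+ 2)))^-1.

Lemma mulmx_Pmx_vecC mu z :
  Pmx mu *m vecC z = Pmx_scale mu *: vecC (z - mu * z^*).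
Proof.
case: z mu => a b [r s]; apply/matrixP => -[[|[|//]] ?] [[|//] ?];
  rewrite /Pmx /Pmx_scale -scalemxAl !mxE !big_ord_recr big_ord0 /= !mxE /=; ring.
Qed.

Lemma sqnorm2_scale_vecC r z :
  sqnorm2 (r *: vecC z) = r ^+ 2 * (complex.Re z ^+ 2 + complex.Im z ^+ 2).
Proof. by case: z => a b; rewrite /sqnorm2 !big_ord_recr big_ord0 /= !mxE /=; ring. Qed.

Lemma sqnormC_eq0 z : (complex.Re z ^+ 2 + complex.Im z ^+ 2 == 0) = (z == 0).
Proof. by case: z => a b; rewrite paddr_eq0 ?sqr_ge0 // !sqrf_eq0 eq_complex. Qed.

Lemma Pmx_scale_gt0 mu : `|mu| < 1 -> 0 < Pmx_scale mu.
Proof.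
case: mu => r s; rewrite normc_def ltcR -sqrtr1 ltr_sqrt ?ltr01 // => lt1.
by rewrite invr_gt0 sqrtr_gt0 subr_gt0.
Qed.

Lemma addr_mul_conj_neq0 mu z : `|mu| < 1 -> z != 0 -> z + mu * z^* != 0.
Proof.
move=> mu_lt1 z_neq0; rewrite addr_eq0; apply/eqP => /(congr1 Num.norm).
rewrite normrN normrM normcJ => ez.
have : `|mu| * `|z| < 1 * `|z| by rewrite ltr_pM2r ?normr_gt0.
by rewrite mul1r -ez ltxx.
Qed.

End ComplexPlane.

Section AffineTriangle.
Variables (R : rcfType) (p : 'I_3 -> R[i]).
Implicit Types (g h : 'I_3 -> R[i]).

Definition tri_area : R :=
  (complex.Re (p 1 - p 0) * complex.Im (p 2 - p 0)
   - complex.Im (p 1 - p 0) * complex.Re (p 2 - p 0)) / 2.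

Definition tri_edge (k : 'I_3) : R[i] := p (k + 2) - p (k + 1).

(* As a complex number, the gradient of a real affine interpolant u is
   (i / 2 Area) sum_k u_k e_k, and f_zbar = (grad Re f + i grad Im f) / 2. *)
Definition tri_dzb g : R[i] :=
  (4 * tri_area)^-1%:C * ('i * \sum_(k < 3) g k * tri_edge k).

Definition tri_dz g : R[i] := (tri_dzb (fun k => (g k)^*))^*.

Lemma big_ord3 (V : nmodType) (G : 'I_3 -> V) :
  \sum_(k < 3) G k = G 0 + G 1 + G 2.
Proof.
rewrite !big_ord_recl big_ord0 addr0 addrA.
by congr (G _ + G _ + G _); apply/val_inj.
Qed.

Lemma sum_mul_tri_edge g : \sum_(k < 3) g k * tri_edge k =
  g 0 * (p 2 - p 1) + g 1 * (p 0 - p 2) + g 2 * (p 1 - p 0).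
Proof.
rewrite big_ord3 /tri_edge add0r.
by congr (_ * (p _ - p _) + _ * (p _ - p _) + _ * (p _ - p _)); apply/val_inj.
Qed.

Lemma tri_taylor0 g (j : 'I_3) : tri_area != 0 ->
  g j - g 0 = tri_dz g * (p j - p 0) + tri_dzb g * (p j - p 0)^*.
Proof.
have [->|[->|->]] : j = 0 \/ j = 1 \/ j = 2.
  by case: j => -[|[|[|//]]] ?; [left|right; left|right; right]; apply/val_inj.
  by rewrite !subrr rmorph0 !mulr0 addr0.
all: rewrite /tri_dz /tri_dzb !sum_mul_tri_edge /tri_area.
all: move: (p 0) (p 1) (p 2) (g 0) (g 1) (g 2).
all: move=> [x0 y0] [x1 y1] [x2 y2] [a0 b0] [a1 b1] [a2 b2] /= hA; simpc.
all: rewrite mulf_eq0 negb_or in hA; case/andP: hA => hA _.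
all: apply/eqP; rewrite eq_complex /=; apply/andP; split; apply/eqP.
all: by field.
Qed.

Lemma tri_taylor g (j k : 'I_3) : tri_area != 0 ->
  g j - g k = tri_dz g * (p j - p k) + tri_dzb g * (p j - p k)^*.
Proof.
move=> hA; have ej := tri_taylor0 g j hA; have ek := tri_taylor0 g k hA.
have -> : p j - p k = (p j - p 0) - (p k - p 0) by ring.
have -> : g j - g k = (g j - g 0) - (g k - g 0) by ring.
by rewrite rmorphB ej ek /=; ring.
Qed.

Lemma tri_area_inj : tri_area != 0 -> injective p.
Proof.
move=> hA j k ejk; apply/eqP; apply: contraLR isT => nejk.
(* apply the Taylor formula to the indicator of vertex j *)
have := tri_taylor (fun i => (i == j)%:R) j k hA.
rewrite ejk subrr rmorph0 !mulr0 addr0 eqxx eq_sym (negbTE nejk) subr0.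
by move/eqP; rewrite oner_eq0.
Qed.

Lemma tri_dzb_lin (a : R[i]) g1 g2 h :
  (forall k, h k = a * g1 k + g2 k) -> tri_dzb h = a * tri_dzb g1 + tri_dzb g2.
Proof.
move=> hE; rewrite /tri_dzb.
rewrite (eq_bigr (fun k => a * (g1 k * tri_edge k) + g2 k * tri_edge k)).
  by rewrite big_split -big_distrr /=; ring.
by move=> k _; rewrite hE mulrDl mulrA.
Qed.

Lemma tri_dz_lin (a : R[i]) g1 g2 h :
  (forall k, h k = a * g1 k + g2 k) -> tri_dz h = a * tri_dz g1 + tri_dz g2.
Proof.
move=> hE; rewrite /tri_dz.
rewrite (@tri_dzb_lin a^* (fun k => (g1 k)^*) (fun k => (g2 k)^*)).
  by rewrite rmorphD rmorphM /= conjcK.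
by move=> k; rewrite hE rmorphD rmorphM.
Qed.

Lemma tri_dz_real (r : 'I_3 -> R) :
  tri_dz (fun k => (r k)%:C) = (tri_dzb (fun k => (r k)%:C))^*.
Proof. by rewrite /tri_dz /tri_dzb; under eq_bigr do rewrite conjc_real. Qed.

Lemma tri_dzb_cst (z : R[i]) : tri_dzb (fun=> z) = 0.
Proof.
rewrite /tri_dzb sum_mul_tri_edge.
have -> : z * (p 2 - p 1) + z * (p 0 - p 2) + z * (p 1 - p 0) = 0 by ring.
by rewrite !mulr0.
Qed.

Lemma tri_dz_cst (z : R[i]) : tri_dz (fun=> z) = 0.
Proof. by rewrite /tri_dz tri_dzb_cst conjc0. Qed.

Lemma tri_beltrami_cst (mu : R[i]) g (j1 j2 : 'I_3) :
  tri_area != 0 -> `|mu| < 1 -> tri_dzb g = mu * tri_dz g ->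
  j1 != j2 -> g j1 = g j2 -> forall k, g k = g j1.
Proof.
move=> hA mu_lt1 hB nej eqg k.
have d_neq0 : p j2 - p j1 != 0.
  by rewrite subr_eq0; apply: contra nej => /eqP/(tri_area_inj hA) ->.
have dz0 : tri_dz g = 0.
  apply/eqP; have := tri_taylor g j2 j1 hA.
  rewrite eqg subrr hB -mulrA mulrCA -mulrDr => /esym/eqP.
  by rewrite mulf_eq0 (negbTE (addr_mul_conj_neq0 mu_lt1 d_neq0)) orbF.
by apply/eqP; rewrite -subr_eq0 tri_taylor // hB dz0 !(mulr0, mul0r) addr0.
Qed.

End AffineTriangle.

Section BeltramiMesh.
Variables (R : rcfType) (n m : nat) (w : 'I_n -> R[i]) (F : 'I_m -> 'I_3 -> 'I_n).
Variable mu : 'I_m -> R[i].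
Implicit Types (f g h : 'I_n -> R[i]) (t : 'I_m).

Local Notation face t := (fun k => w (F t k)).

Definition dzb f t : R[i] := tri_dzb (face t) (fun k => f (F t k)).
Definition dz f t : R[i] := tri_dz (face t) (fun k => f (F t k)).

Definition beltrami_sol f : Prop := forall t, dzb f t = mu t * dz f t.

Lemma beltrami_sol_lin (a : R[i]) f g h : (forall j, h j = a * f j + g j) ->
  beltrami_sol f -> beltrami_sol g -> beltrami_sol h.
Proof.
move=> hE sf sg t; rewrite /dzb /dz.
rewrite (tri_dzb_lin _ (fun k => hE (F t k))) (tri_dz_lin _ (fun k => hE (F t k))).
by move: (sf t) (sg t); rewrite /dzb /dz => -> ->; ring.
Qed.

Lemma beltrami_sol_cst (z : R[i]) : beltrami_sol (fun=> z).
Proof. by move=> t; rewrite /dzb /dz tri_dzb_cst tri_dz_cst mulr0. Qed.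

Lemma fvert_Zp t (k : nat) : fvert w F t k = w (F t k%:R).
Proof. by rewrite /fvert Zp_nat. Qed.

Lemma signed_area_tri t : signed_area w F t = tri_area (face t).
Proof. by rewrite /signed_area !fvert_Zp. Qed.

Lemma grad_dzb u t : grad w F u t = vecC (2 * dzb (fun j => (u j)%:C) t).
Proof.
rewrite /grad /dzb /tri_dzb -signed_area_tri mulrA.
have -> : 2 * ((4 * signed_area w F t)^-1)%:C = ((2 * signed_area w F t)^-1)%:C.
  rewrite -[2 : R[i]](rmorph_nat (real_complex R)) -rmorphM; congr (_%:C).
  by move: (signed_area w F t) => A; rewrite !invfM mulrA; congr (_ * _); field.
rewrite vecC_realM -mulmx_Jmx_vecC [vecC (\sum_(_ < _) _)]raddf_sum.
congr (_ *: (_ *m _)).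
by apply: eq_bigr => k _; rewrite /= vecC_realM /tri_edge !fvert_Zp !natrD natr_Zp.
Qed.

Lemma qc_integrandE u v f t : (forall j, f j = (u j)%:C + 'i * (v j)%:C) ->
  Pmx (mu t) *m grad w F u t + Jmx R *m (Pmx (mu t) *m grad w F v t)
  = Pmx_scale (mu t) *: vecC (2 * (dzb f t - mu t * dz f t)).
Proof.
move=> fE; rewrite !grad_dzb !mulmx_Pmx_vecC -scalemxAr mulmx_Jmx_vecC.
rewrite -scalerDr -raddfD.
have fE' k : f (F t k) = 'i * (v (F t k))%:C + (u (F t k))%:C by rewrite fE addrC.
rewrite /dzb /dz (tri_dzb_lin _ fE') (tri_dz_lin _ fE') !tri_dz_real.
move: (tri_dzb _ (fun k => (u (F t k))%:C)) => du.
move: (tri_dzb _ (fun k => (v (F t k))%:C)) => dv.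
by rewrite !rmorphM rmorph_nat; congr (_ *: vecC _); ring.
Qed.

Lemma E_QC_eq0 u v f :
  (forall t, 0 < signed_area w F t) -> (forall t, `|mu t| < 1) ->
  (forall j, f j = (u j)%:C + 'i * (v j)%:C) ->
  E_QC w F mu u v = 0 <-> beltrami_sol f.
Proof.
move=> area_gt0 mu_lt1 fE.
pose res t := 2 * (dzb f t - mu t * dz f t).
pose term t := signed_area w F t *
  (Pmx_scale (mu t) ^+ 2 * (complex.Re (res t) ^+ 2 + complex.Im (res t) ^+ 2)).
have termE t : signed_area w F t * sqnorm2 (Pmx (mu t) *m grad w F u t
    + Jmx R *m (Pmx (mu t) *m grad w F v t)) = term t.
  by rewrite (qc_integrandE t fE) sqnorm2_scale_vecC.
have term_ge0 t : 0 <= term t.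
  by apply: mulr_ge0; [exact: ltW | rewrite mulr_ge0 ?addr_ge0 ?sqr_ge0].
have term_eq0 t : (term t == 0) = (dzb f t == mu t * dz f t).
  rewrite /term mulf_eq0 (gt_eqF (area_gt0 t)) mulf_eq0 sqrf_eq0.
  rewrite (gt_eqF (Pmx_scale_gt0 (mu_lt1 t))) sqnormC_eq0.
  by rewrite mulf_eq0 pnatr_eq0 subr_eq0.
rewrite /E_QC (eq_bigr _ (fun t _ => termE t)); split.
- move/eqP; rewrite mulf_eq0 invr_eq0 pnatr_eq0 /= => /eqP/psumr_eq0P sum0 t.
  by apply/eqP; rewrite -term_eq0 sum0.
- by move=> sol; rewrite big1 ?mulr0 // => t _; apply/eqP; rewrite term_eq0 sol.
Qed.

Section Rigidity.
Hypothesis area_gt0 : forall t, 0 < signed_area w F t.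
Hypothesis mu_lt1 : forall t, `|mu t| < 1.

Lemma face_area_neq0 t : tri_area (face t) != 0.
Proof. by rewrite -signed_area_tri gt_eqF. Qed.

Lemma beltrami_sol_face_cst f t (j1 j2 : 'I_3) : beltrami_sol f ->
  j1 != j2 -> f (F t j1) = f (F t j2) -> forall k, f (F t k) = f (F t j1).
Proof.
by move=> sol; apply: tri_beltrami_cst (face_area_neq0 t) (mu_lt1 t) (sol t).
Qed.

Lemma beltrami_sol_edge_adj f t1 t2 z : beltrami_sol f -> edge_adj F t1 t2 ->
  (forall k, f (F t1 k) = z) -> forall k, f (F t2 k) = z.
Proof.
move=> sol /existsP[i1 /existsP[i2 /existsP[j1 /existsP[j2]]]].
case/and3P=> nei /eqP e1 /eqP e2 cst1.
have nej : j1 != j2.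
  apply: contra nei => /eqP ej; apply/eqP/(tri_area_inj (face_area_neq0 t1)).
  by rewrite /= e1 e2 ej.
move=> k; rewrite (beltrami_sol_face_cst sol nej) -e1 ?cst1 //.
by rewrite -e2 !cst1.
Qed.

Lemma beltrami_sol_connect f t1 t2 z : beltrami_sol f ->
  connect (edge_adj F) t1 t2 ->
  (forall k, f (F t1 k) = z) -> forall k, f (F t2 k) = z.
Proof.
move=> sol /connectP[p]; elim: p t1 => [|t p IHp] t1 /=; first by move=> _ ->.
case/andP=> adj path_p last_p cst1; apply: IHp path_p last_p _.
exact: beltrami_sol_edge_adj adj cst1.
Qed.

Hypothesis vertex_in_face : forall j : 'I_n, exists t k, F t k = j.
Hypothesis faces_connected : forall t1 t2, connect (edge_adj F) t1 t2.

Lemma beltrami_sol_rigid f t (j1 j2 : 'I_3) : beltrami_sol f ->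
  j1 != j2 -> f (F t j1) = f (F t j2) -> forall j, f j = f (F t j1).
Proof.
move=> sol nej eqf j; have [t' [k <-]] := vertex_in_face j.
have face_cst := beltrami_sol_face_cst sol nej eqf.
exact: beltrami_sol_connect sol (faces_connected t t') face_cst k.
Qed.

Lemma beltrami_sol_affine g h t : beltrami_sol g -> beltrami_sol h ->
  g (F t 0) != g (F t 1) -> exists a b, forall j, h j = a * g j + b.
Proof.
move=> sol_g sol_h neg.
pose a := (h (F t 1) - h (F t 0)) / (g (F t 1) - g (F t 0)).
pose b := h (F t 0) - a * g (F t 0).
have sol_k : beltrami_sol (fun j => h j - (a * g j + b)).
  apply: (beltrami_sol_lin (a := - a) (f := g) (g := fun j => h j - b)) sol_g _.
    by move=> j; ring.
  apply: (beltrami_sol_lin (a := 1) (f := h) (g := fun=> - b)) sol_h _.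
    by move=> j; ring.
  exact: beltrami_sol_cst.
have k0 : h (F t 0) - (a * g (F t 0) + b) = 0 by rewrite /b; ring.
have k1 : h (F t 1) - (a * g (F t 1) + b) = 0.
  by rewrite /b /a; field; rewrite subr_eq0 eq_sym.
exists a, b => j; apply/eqP; rewrite -subr_eq0; apply/eqP.
have := beltrami_sol_rigid sol_k (isT : (0 : 'I_3) != 1) (etrans k0 (esym k1)) j.
by rewrite k0.
Qed.

Lemma beltrami_sol_constant h : beltrami_sol h ->
  (forall t, h (F t 0) = h (F t 1)) -> exists b, forall j, h j = b.
Proof.
move=> sol eqh; case: (pickP (fun _ : 'I_m => true)) => [t _ | no_face].
  by exists (h (F t 0)); apply: beltrami_sol_rigid sol _ (eqh t).
by exists 0 => j; have [t _] := vertex_in_face j; have := no_face t.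
Qed.

End Rigidity.

End BeltramiMesh.

Theorem theorem4p1 (R : rcfType) (n m : nat) (w : 'I_n -> R[i])
    (F : 'I_m -> 'I_3 -> 'I_n) (mu : 'I_m -> R[i]) :
  planar_mesh w F ->
  (forall t, `|mu t| < 1) ->
  exists f0 : 'I_n -> R[i],
    forall u v : 'I_n -> R,
      E_QC w F mu u v = 0 <->
      exists a b : R[i], forall j, ((u j)%:C + 'i * (v j)%:C)%C = a * f0 j + b.
Proof.
move=> [_ [area_gt0 [vertex_in_face [_ faces_connected]]]] mu_lt1.
(* the 'i of the statement is Num.imaginary, which is 'i%C by definition *)
have E_QC0 u v := E_QC_eq0 (u := u) (v := v) area_gt0 mu_lt1 (fun j => erefl).
have cst := beltrami_sol_cst w F mu.
case: (classic (exists g t, beltrami_sol w F mu g /\ g (F t 0) != g (F t 1))).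
  move=> [g [t [sol_g neg]]]; exists g => u v; split => [/E_QC0 sol | [a [b ab]]].
    exact: beltrami_sol_affine sol_g sol neg.
  by apply/E_QC0; apply: beltrami_sol_lin ab sol_g (cst _).
move=> no_sol; exists (fun=> 0) => u v; split => [/E_QC0 sol | [a [b ab]]].
  have [|b hb] :=
    beltrami_sol_constant area_gt0 mu_lt1 vertex_in_face faces_connected sol.
    move=> t; apply: NNPP => neq; apply: no_sol.
    by exists (fun j => (u j)%:C + 'i * (v j)%:C), t; split => //; apply/eqP.
  by exists 0, b => j; rewrite mul0r add0r hb.
by apply/E_QC0; apply: beltrami_sol_lin ab (cst _) (cst _).
Qed.
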